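(* Let $G$ be a graph and $e=uv\in E(G)$. If $m\geq 2$ is an integer and $$P(G-\{e\},m)<\frac{m}{m-1}P(G,m),$$ then $P_{DP}(G,m)<P(G,m)$.
   Context: All graphs are finite and simple; $G-\{e\}$ is $G$ with edge $e$ deleted. $P(G,m)$ denotes the chromatic polynomial of $G$. A cover of a graph $G$ is a pair $\mathcal{H}=(L,H)$ where $H$ is a graph and $L:V(G)\to\mathcal{P}(V(H))$ satisfies: (1) the sets $L(u)$, $u\in V(G)$, partition $V(H)$; (2) for every $u$, $H[L(u)]$ is complete; (3) if $E_H(L(u),L(v))\neq\emptyset$ then $u=v$ or $uv\in E(G)$; (4) if $uv\in E(G)$ then $E_H(L(u),L(v))$ is a matching (possibly empty). Here $E_H(S,U)$ is the set of edges of $H$ between $S$ and $U$. The cover is $m$-fold if $|L(u)|=m$ for all $u$. An $\mathcal{H}$-coloring is an independent set of $H$ of size $|V(G)|$. $P_{DP}(G,\mathcal{H})$ is the number of $\mathcal{H}$-colorings, and $P_{DP}(G,m)$ is the minimum of $P_{DP}(G,\mathcal{H})$ over all $m$-fold covers $\mathcal{H}$ of $G$. *)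

From HB Require Import structures.
From mathcomp Require Import all_boot all_order all_algebra.
From Stdlib Require Import ClassicalEpsilon.
Definition pbool (P : Prop) : bool := if excluded_middle_informative P then true else false.
Set Implicit Arguments. Unset Strict Implicit. Unset Printing Implicit Defensive.

Definition simple_graph (T : finType) (g : rel T) : Prop :=
  symmetric g /\ irreflexive g.

Definition del_edge (T : finType) (g : rel T) (u v : T) : rel T :=
  fun x y => g x y && ~~ (((x == u) && (y == v)) || ((x == v) && (y == u))).

Definition chrom (T : finType) (g : rel T) (m : nat) : nat :=
  #|[set f : {ffun T -> 'I_m} | [forall x, forall y, g x y ==> (f x != f y)]]|.

Definition is_cover (T : finType) (g : rel T) (VH : finType) (H : rel VH)
    (L : T -> {set VH}) : Prop :=
  [/\ simple_graph H,
      (forall x : VH, exists u, x \in L u) /\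
      (forall (u w : T) (x : VH), x \in L u -> x \in L w -> u = w),
      (forall (u : T) (x y : VH), x \in L u -> y \in L u -> x != y -> H x y),
      (forall (u v : T) (x y : VH), x \in L u -> y \in L v -> H x y ->
          u = v \/ g u v) &
      (forall u v : T, g u v ->
         (forall x y y', x \in L u -> y \in L v -> y' \in L v ->
             H x y -> H x y' -> y = y') /\
         (forall x x' y, x \in L u -> x' \in L u -> y \in L v ->
             H x y -> H x' y -> x = x'))].

Definition is_mfold_cover (T : finType) (g : rel T) (m : nat) (VH : finType)
    (H : rel VH) (L : T -> {set VH}) : Prop :=
  is_cover g H L /\ forall u, #|L u| = m.

(* Number of H-colorings: independent sets of H of size |V(G)|. *)
Definition PDP_cover (T : finType) (VH : finType) (H : rel VH) : nat :=
  #|[set I : {set VH} | [forall x in I, forall y in I, ~~ H x y]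
                        && (#|I| == #|T|)]|.

Definition edge_rel (VH : finType) (E : {set VH * VH}) : rel VH :=
  fun x y => (x, y) \in E.

(* An m-fold cover
   has exactly |V(G)| * m vertices, so up to isomorphism (which preserves the
   number of H-colorings) every m-fold cover has vertex set T * 'I_m; we take
   the minimum over all such covers (all L, all edge sets).  The initial value
   m ^ #|T| is an upper bound for every P_DP(G,H) (an independent set meets
   each clique L(u) at most once), and m-fold covers always exist, so the
   fold computes the true minimum. *)
Definition PDP (T : finType) (g : rel T) (m : nat) : nat :=
  \big[minn/(m ^ #|T|)%N]_(L : {ffun T -> {set T * 'I_m}})
   \big[minn/(m ^ #|T|)%N]_(E : {set (T * 'I_m) * (T * 'I_m)}
                             | pbool (is_mfold_cover g m (edge_rel E) L))
      PDP_cover T (edge_rel E).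

From HB Require Import structures.
From mathcomp Require Import all_boot all_order all_algebra.
From Stdlib Require Import ClassicalEpsilon FunctionalExtensionality.
Import Order.TTheory GRing.Theory Num.Theory.
Set Implicit Arguments. Unset Strict Implicit. Unset Printing Implicit Defensive.

(* Write k = m >= 2 and let N = P(G - e, k) count the proper
   colourings of G - e with colours in Z_k.  For every shift d in Z_k we build
   a k-fold cover H_d of G: each fibre L(x) = {x} x Z_k is a clique, an edge
   xy <> uv of G is covered by the identity matching (x,i)(y,i), and the edge
   e = uv by the shifted matching (u,i)(v,i+d).  An H_d-colouring picks exactly
   one vertex (x, f x) in each fibre, and these f are proper colourings of
   G - e with f v - f u <> d, so
       P_DP(G,k) <= N - #{f proper for G - e | f v - f u = d}.
   Summing over the k shifts, whose classes partition the colourings of G - e,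
   gives k P_DP(G,k) <= (k - 1) N, and (k - 1) N < k P(G,k) by hypothesis. *)

Lemma PDP_le_cover (T : finType) (g : rel T) (k : nat) (H : rel (T * 'I_k))
    (L : {ffun T -> {set T * 'I_k}}) :
  is_mfold_cover g k H L -> (PDP g k <= PDP_cover T H)%N.
Proof.
have -> : H = edge_rel [set pq | H pq.1 pq.2].
  by do 2 apply: functional_extensionality => ?; rewrite /edge_rel inE.
move=> cover; rewrite /PDP.
have := bigmin_le (k ^ #|T|)%N L; rewrite minEnat => min_le_L.
apply: leq_trans (min_le_L _) _.
have := @bigmin_le_cond _ _ _ (k ^ #|T|)%N; rewrite minEnat; apply.
by rewrite /pbool; case: excluded_middle_informative.
Qed.

Definition proper_colorings (T : finType) (g : rel T) (k : nat) :
  {set {ffun T -> 'I_k}} :=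
  [set f : {ffun T -> 'I_k} | [forall x, forall y, g x y ==> (f x != f y)]].

Lemma chromE (T : finType) (g : rel T) (k : nat) :
  chrom g k = #|proper_colorings g k|.
Proof. by []. Qed.

Definition fibres (T : finType) (k : nat) : {ffun T -> {set T * 'I_k}} :=
  [ffun x => setX [set x] [set: 'I_k]].

Lemma mem_fibres (T : finType) (k : nat) (x : T) (p : T * 'I_k) :
  (p \in fibres T k x) = (p.1 == x).
Proof. by case: p => y i; rewrite ffunE in_setX in_set1 in_setT andbT. Qed.

Lemma card_fibres (T : finType) (k : nat) (x : T) : #|fibres T k x| = k.
Proof. by rewrite ffunE cardsX cards1 cardsT card_ord mul1n. Qed.

Lemma simple_edge_neq (T : finType) (g : rel T) (x y : T) :
  simple_graph g -> g x y -> x != y.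
Proof. by case=> _ irr_g; apply: contraTneq => ->; rewrite irr_g. Qed.

Section Transversals.
Variables (T : finType) (k : nat) (H : rel (T * 'I_k)).
Hypothesis fibre_clique : forall x (i j : 'I_k), i != j -> H (x, i) (x, j).

Definition independent (I : {set T * 'I_k}) : bool :=
  [forall p in I, forall q in I, ~~ H p q].

Definition choice_fun (i0 : 'I_k) (I : {set T * 'I_k}) : {ffun T -> 'I_k} :=
  [ffun x => odflt i0 [pick i | (x, i) \in I]].

(* An independent set meets every fibre at most once, so if it has |T|
   elements it is the graph of its choice function. *)
Lemma independent_graph (i0 : 'I_k) (I : {set T * 'I_k}) :
  independent I -> #|I| = #|T| -> I = [set (x, choice_fun i0 I x) | x : T].
Proof.
move=> /forallP indI cardI; apply/eqP.
rewrite eqEcard cardI leq_imset_card andbT; apply/subsetP => -[x i] xiI.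
apply/imsetP; exists x => //; rewrite ffunE.
case: pickP => [j xjI|/(_ i)]; last by rewrite xiI.
congr (_, _); apply/eqP; apply: contraT => ne_ij.
move: (indI (x, i)); rewrite xiI => /forallP /(_ (x, j)).
by rewrite xjI fibre_clique.
Qed.

Lemma colorings_le_transversals (i0 : 'I_k) :
  (PDP_cover T H <=
   #|[set f : {ffun T -> 'I_k} |
        [forall x, forall y, ~~ H (x, f x) (y, f y)]]|)%N.
Proof.
rewrite /PDP_cover; set S := [set I | _].
have graphS I : I \in S -> I = [set (x, choice_fun i0 I x) | x : T].
  by rewrite inE => /andP[indI /eqP cardI]; apply: independent_graph.
apply: (@leq_trans #|choice_fun i0 @: S|).
  rewrite card_in_imset // => I J IS JS eqIJ.
  by rewrite (graphS I IS) (graphS J JS) eqIJ.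
apply/subset_leq_card/subsetP => _ /imsetP[I IS ->]; rewrite inE.
have graph_in x : (x, choice_fun i0 I x) \in I.
  by rewrite [in X in _ \in X](graphS I IS) imset_f.
move: IS; rewrite inE => /andP[/forallP indI _].
apply/forallP => x; apply/forallP => y.
move: (indI (x, choice_fun i0 I x)); rewrite graph_in => /forallP.
by move=> /(_ (y, choice_fun i0 I y)); rewrite graph_in.
Qed.

End Transversals.

Section PermutationCover.
Variables (T : finType) (g : rel T) (k : nat) (pi : T -> T -> 'I_k -> 'I_k).
Hypothesis g_simple : simple_graph g.
Hypothesis pi_cancel : forall x y, cancel (pi x y) (pi y x).

Definition perm_cover (p q : T * 'I_k) : bool :=
  ((p.1 == q.1) && (p.2 != q.2)) || (g p.1 q.1 && (pi p.1 q.1 p.2 == q.2)).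

Lemma perm_cover_edge (x y : T) (i j : 'I_k) :
  g x y -> perm_cover (x, i) (y, j) = (pi x y i == j).
Proof.
move=> gxy; have ne_xy := simple_edge_neq g_simple gxy.
by rewrite /perm_cover /= (negbTE ne_xy) gxy.
Qed.

(* pi x y and pi y x are inverse, so perm_cover is symmetric. *)
Lemma perm_cover_sym : symmetric perm_cover.
Proof.
have [sym_g _] := g_simple.
suff imp p q : perm_cover p q -> perm_cover q p.
  by move=> p q; apply/idP/idP; apply: imp.
case: p q => [x i] [y j]; rewrite /perm_cover /=.
case/orP => [/andP[/eqP-> ne_ij]|/andP[gxy /eqP<-]].
  by rewrite eqxx eq_sym ne_ij.
by rewrite sym_g gxy pi_cancel eqxx orbT.
Qed.

(* The fibres together with perm_cover form a k-fold cover of g: the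
   matchings of condition (4) are the graphs of the injections pi x y. *)
Lemma perm_cover_mfold : is_mfold_cover g k perm_cover (fibres T k).
Proof.
have [_ irr_g] := g_simple.
split; last exact: card_fibres.
split.
- split; first exact: perm_cover_sym.
  by move=> [x i]; rewrite /perm_cover /= !eqxx irr_g.
- split; first by move=> p; exists p.1; rewrite mem_fibres.
  by move=> x y p; rewrite !mem_fibres => /eqP <- /eqP.
- move=> x [y i] [z j]; rewrite !mem_fibres /= => /eqP -> /eqP -> ne_pq.
  rewrite /perm_cover /= eqxx; apply/orP; left.
  by apply: contra ne_pq => /eqP ->.
- move=> x y [x' i] [y' j]; rewrite !mem_fibres /= => /eqP -> /eqP ->.
  rewrite /perm_cover /=.
  by case/orP => [/andP[/eqP -> _]|/andP[gxy _]]; [left | right].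
- move=> x y gxy; split.
  + move=> [x1 i] [y1 j] [y2 j']; rewrite !mem_fibres /=.
    move=> /eqP -> /eqP -> /eqP ->; rewrite !perm_cover_edge //.
    by move=> /eqP <- /eqP <-.
  + move=> [x1 i] [x2 i'] [y1 j]; rewrite !mem_fibres /=.
    move=> /eqP -> /eqP -> /eqP ->; rewrite !perm_cover_edge //.
    by move=> /eqP <- /eqP /(can_inj (pi_cancel x y)) ->.
Qed.

Lemma perm_cover_colorings (i0 : 'I_k) :
  (PDP_cover T perm_cover <=
   #|[set f : {ffun T -> 'I_k} |
        [forall x, forall y, g x y ==> (pi x y (f x) != f y)]]|)%N.
Proof.
have clique x (i j : 'I_k) : i != j -> perm_cover (x, i) (x, j).
  by rewrite /perm_cover /= eqxx => ->.
apply: leq_trans (colorings_le_transversals clique i0) _.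
apply/subset_leq_card/subsetP => f; rewrite !inE => /forallP indep.
apply/forallP => x; apply/forallP => y; apply/implyP => gxy.
by move/forallP: (indep x) => /(_ y); rewrite perm_cover_edge.
Qed.

End PermutationCover.

Local Open Scope ring_scope.

Section ShiftedCover.
Variables (T : finType) (g : rel T) (n : nat) (u v : T) (d : 'I_n.+1).
Hypotheses (g_simple : simple_graph g) (g_uv : g u v).
Let ne_uv : u != v := simple_edge_neq g_simple g_uv.

Definition shift_matching (x y : T) (i : 'I_n.+1) : 'I_n.+1 :=
  if (x == u) && (y == v) then i + d
  else if (x == v) && (y == u) then i - d else i.

Definition diff_class : {set {ffun T -> 'I_n.+1}} :=
  [set f : {ffun T -> 'I_n.+1} | f v - f u == d].

Lemma shift_matching_cancel (x y : T) :
  cancel (shift_matching x y) (shift_matching y x).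
Proof.
move=> i; rewrite /shift_matching [(y == u) && _]andbC [(y == v) && _]andbC.
have [/andP[/eqP-> /eqP->] | _] := boolP ((x == u) && (y == v)).
  by rewrite (negbTE ne_uv) addrK.
by case: ifP => c; rewrite ?c ?subrK.
Qed.

Lemma shift_proper_sub :
  [set f : {ffun T -> 'I_n.+1} |
     [forall x, forall y, g x y ==> (shift_matching x y (f x) != f y)]]
  \subset proper_colorings (del_edge g u v) n.+1 :\: diff_class.
Proof.
apply/subsetP => f; rewrite !inE => /forallP proper; apply/andP; split.
  move/forallP: (proper u) => /(_ v); rewrite g_uv /shift_matching !eqxx /=.
  by apply: contra => /eqP <-; rewrite addrC subrK.
apply/forallP => x; apply/forallP => y; apply/implyP => /andP[gxy].
rewrite negb_or => /andP[/negbTE not_uv /negbTE not_vu].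
move/forallP: (proper x) => /(_ y).
by rewrite gxy /shift_matching not_uv not_vu.
Qed.

Lemma PDP_shift_bound :
  (PDP g n.+1 + #|proper_colorings (del_edge g u v) n.+1 :&: diff_class|
     <= #|proper_colorings (del_edge g u v) n.+1|)%N.
Proof.
set A := proper_colorings _ _.
rewrite -(cardsID diff_class A) [leqRHS]addnC leq_add2r.
have cover := perm_cover_mfold g_simple shift_matching_cancel.
apply: leq_trans (PDP_le_cover cover) _.
apply: leq_trans (perm_cover_colorings shift_matching g_simple 0) _.
exact/subset_leq_card/shift_proper_sub.
Qed.

End ShiftedCover.

Lemma sum_card_level_sets (aT rT : finType) (A : {set aT}) (phi : aT -> rT) :
  (\sum_(y : rT) #|A :&: [set x | phi x == y]|)%N = #|A|.
Proof.
rewrite -sum1_card (partition_big phi xpredT) //=; apply: eq_bigr => y _.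
by rewrite -sum1_card; apply: eq_bigl => x; rewrite !inE.
Qed.

Lemma PDP_average_bound (T : finType) (g : rel T) (u v : T) (n : nat) :
  simple_graph g -> g u v ->
  (n.+1 * PDP g n.+1 <= n * chrom (del_edge g u v) n.+1)%N.
Proof.
move=> g_simple g_uv; rewrite chromE; set A := proper_colorings _ _.
have : (\sum_(d : 'I_n.+1) (PDP g n.+1 + #|A :&: diff_class u v d|)
          <= \sum_(d : 'I_n.+1) #|A|)%N.
  by apply: leq_sum => d _; apply: PDP_shift_bound.
rewrite big_split /= sum_card_level_sets !sum_nat_const card_ord.
by rewrite [in leqRHS]mulSnr leq_add2r.
Qed.

Theorem mainTheorem9 (T : finType) (g : rel T) (hG : simple_graph g)
    (u v : T) (huv : g u v) (m : nat) (hm : (2 <= m)%N) :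
  ((chrom (del_edge g u v) m)%:R : rat) < m%:R / (m - 1)%:R * (chrom g m)%:R ->
  (PDP g m < chrom g m)%N.
Proof.
case: m hm => [|[|n]] // _.
rewrite mulrAC ltr_pdivlMr ?ltr0n // -!natrM ltr_nat subn1 /= => lt_chrom.
have avg := PDP_average_bound n.+1 hG huv.
rewrite mulnC in lt_chrom.
by rewrite -(ltn_pmul2l (ltn0Sn n.+1)); apply: leq_ltn_trans avg lt_chrom.
Qed.
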